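(* Let $(\gamma_i)_{i=0}^n$ be a linear sequence of geodesics in $\mathbb{H}^2$, and let $(x_i)_{i=0}^n$ be a homologous sequence of points on the $\gamma_i$. Then for every $y \in \gamma_n$, $$d(x_n, y) \le d(x_0, y).$$
   Context: A linear sequence of geodesics in $\mathbb{H}^2$ is a sequence $(\gamma_i)_{i=0}^n$ of pairwise disjoint geodesics, consecutive ones having a common orthogonal, such that each $\gamma_i$ separates those before it from those after it. Each $\gamma_i$ is oriented so that the geodesics following it in the sequence lie to its left ($\mathbb{H}^2$ being oriented). Let $\eta_i$ be the common orthogonal of $\gamma_i$ and $\gamma_{i+1}$. A homologous sequence of points is a sequence $x_i\in\gamma_i$ such that for each $i$, the signed distance (along $\gamma_{i+1}$, with its orientation) from the foot of $\eta_i$ on $\gamma_{i+1}$ to $x_{i+1}$ equals the signed distance (along $\gamma_i$, with its orientation) from the foot of $\eta_i$ on $\gamma_i$ to $x_i$; equivalently $x_{i+1}$ is the image of $x_i$ under the orientation-preserving isometry taking the oriented geodesic $\gamma_i$ to $\gamma_{i+1}$ and the foot of $\eta_i$ on $\gamma_i$ to its foot on $\gamma_{i+1}$. *)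

(* hyperboloid model of the hyperbolic plane H^2 in R^{2,1}. *)
From Stdlib Require Import Reals.
Open Scope R_scope.

Record V3 := mkV3 { v0 : R; v1 : R; v2 : R }.

Definition vadd (a b : V3) : V3 := mkV3 (v0 a + v0 b) (v1 a + v1 b) (v2 a + v2 b).
Definition vscale (k : R) (a : V3) : V3 := mkV3 (k * v0 a) (k * v1 a) (k * v2 a).

Definition mink (a b : V3) : R := - v0 a * v0 b + v1 a * v1 b + v2 a * v2 b.

Definition inH2 (x : V3) : Prop := mink x x = -1 /\ 0 < v0 x.

Definition arcosh (c : R) : R := ln (c + sqrt (c * c - 1)).

Definition hdist (x y : V3) : R := arcosh (- mink x y).

(* An oriented geodesic is given by a point p of H^2 and a unit tangent
   vector v at p (its direction).  Its unit-speed (arclength) parametrization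
   is t |-> cosh t p + sinh t v, oriented by increasing t. *)
Record ogeod := mkGeod { gp : V3; gv : V3 }.

Definition geod_ok (g : ogeod) : Prop :=
  inH2 (gp g) /\ mink (gv g) (gv g) = 1 /\ mink (gp g) (gv g) = 0.

Definition gpt (g : ogeod) (t : R) : V3 :=
  vadd (vscale (cosh t) (gp g)) (vscale (sinh t) (gv g)).

Definition gtan (g : ogeod) (t : R) : V3 :=
  vadd (vscale (sinh t) (gp g)) (vscale (cosh t) (gv g)).

Definition on_geod (g : ogeod) (x : V3) : Prop := exists t, x = gpt g t.

(* Orientation of H^2: a tangent frame (v, w) at p is positive iff
   det(p, v, w) > 0.  The positive unit normal to the oriented geodesic g
   (i.e. the unit tangent w at p with (gv g, w) a positive orthonormal frame)
   is J (p x v) with J = diag(-1,1,1) and x the euclidean cross product. *)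
Definition left_normal (g : ogeod) : V3 :=
  let p := gp g in let v := gv g in
  mkV3 (- (v1 p * v2 v - v2 p * v1 v))
       (v2 p * v0 v - v0 p * v2 v)
       (v0 p * v1 v - v1 p * v0 v).

Definition left_of (g : ogeod) (x : V3) : Prop := inH2 x /\ 0 < mink x (left_normal g).
Definition right_of (g : ogeod) (x : V3) : Prop := inH2 x /\ mink x (left_normal g) < 0.

Definition meets_orth (h g : ogeod) (a : R) : Prop :=
  exists s, gpt h s = gpt g a /\ mink (gtan h s) (gtan g a) = 0.

Definition common_orth_feet (g g' : ogeod) (a b : R) : Prop :=
  exists h, geod_ok h /\ meets_orth h g a /\ meets_orth h g' b.

(* (gamma_i)_{i=0..n} is a linear sequence of geodesics, each gamma_i being
   oriented so that the later ones lie to its left. *)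
Definition linear_seq (n : nat) (gam : nat -> ogeod) : Prop :=
  (forall i, (i <= n)%nat -> geod_ok (gam i)) /\
  (forall i j, (i <= n)%nat -> (j <= n)%nat -> i <> j ->
     forall x, on_geod (gam i) x -> ~ on_geod (gam j) x) /\
  (forall i, (i < n)%nat -> exists a b, common_orth_feet (gam i) (gam (S i)) a b) /\
  (forall i j, (j < i)%nat -> (i <= n)%nat ->
     forall x, on_geod (gam j) x -> right_of (gam i) x) /\
  (forall i k, (i < k)%nat -> (k <= n)%nat ->
     forall x, on_geod (gam k) x -> left_of (gam i) x).

From Stdlib Require Import Reals Lra Psatz Lia.
Open Scope R_scope.

(* In the hyperboloid model cosh d(x, y) = -<x, y>, so it suffices to show
   -<x_(i+1), y> <= -<x_i, y> at each step.  Let P be the foot of eta_i on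
   gamma_i, V the tangent of gamma_i there and N its left normal.  The foot
   on gamma_(i+1) is P' = cosh d P + sinh d N (d > 0 the distance between the feet),
   and gamma_(i+1) has the same tangent V at P'.  Thus x_i = cosh t P + sinh t V
   and x_(i+1) = cosh t P' + sinh t V are exchanged by the reflection in the
   perpendicular bisector of the segment P P' of eta_i, and y, lying in the
   closed left half-plane of gamma_(i+1), is on the side of x_(i+1). *)

Lemma V3_ext (a b : V3) : v0 a = v0 b -> v1 a = v1 b -> v2 a = v2 b -> a = b.
Proof. destruct a, b; cbn; intros -> -> ->; reflexivity. Qed.

Lemma vscale_1 (a : V3) : vscale 1 a = a.
Proof. apply V3_ext; cbn; ring. Qed.

Lemma cosh_sq_sub_sinh_sq (t : R) : cosh t * cosh t - sinh t * sinh t = 1.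
Proof. unfold cosh, sinh; rewrite exp_Ropp; field; apply exp_neq_0. Qed.

Lemma cosh_add (x y : R) : cosh (x + y) = cosh x * cosh y + sinh x * sinh y.
Proof.
  unfold cosh, sinh; rewrite !exp_Ropp, exp_plus.
  field; split; apply exp_neq_0.
Qed.

Lemma sinh_add (x y : R) : sinh (x + y) = sinh x * cosh y + cosh x * sinh y.
Proof.
  unfold cosh, sinh; rewrite !exp_Ropp, exp_plus.
  field; split; apply exp_neq_0.
Qed.

Lemma cosh_ge_1 (t : R) : 1 <= cosh t.
Proof.
  assert (0 < cosh t) by (unfold cosh; pose proof (exp_pos t); pose proof (exp_pos (- t)); lra).
  pose proof (cosh_sq_sub_sinh_sq t). nra.
Qed.

Lemma arcosh_le (c1 c2 : R) : 1 <= c1 -> c1 <= c2 -> arcosh c1 <= arcosh c2.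
Proof.
  intros H1 H12; unfold arcosh.
  assert (Hsqrt : sqrt (c1 * c1 - 1) <= sqrt (c2 * c2 - 1)) by (apply sqrt_le_1_alt; nra).
  pose proof (sqrt_pos (c1 * c1 - 1)).
  destruct (Rle_lt_or_eq_dec _ _ (Rplus_le_compat _ _ _ _ H12 Hsqrt)) as [Hlt | ->].
  - left; apply ln_increasing; lra.
  - right; reflexivity.
Qed.

(* The Lorentzian cross product J (p x v); left_normal g is lcross (gp g) (gv g). *)
Definition lcross (p v : V3) : V3 :=
  mkV3 (- (v1 p * v2 v - v2 p * v1 v)) (v2 p * v0 v - v0 p * v2 v) (v0 p * v1 v - v1 p * v0 v).

Ltac mink_ring := unfold mink, vadd, vscale, lcross; cbn; ring.
Ltac v3_ring := apply V3_ext; unfold mink, vadd, vscale, lcross; cbn; ring.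

Lemma mink_sym (a b : V3) : mink a b = mink b a.
Proof. mink_ring. Qed.

Lemma mink_vaddl (a b c : V3) : mink (vadd a b) c = mink a c + mink b c.
Proof. mink_ring. Qed.

Lemma mink_vscalel (k : R) (a b : V3) : mink (vscale k a) b = k * mink a b.
Proof. mink_ring. Qed.

Lemma mink_comb (a b c d : R) (p v : V3) :
  mink (vadd (vscale a p) (vscale b v)) (vadd (vscale c p) (vscale d v)) =
  a * c * mink p p + (a * d + b * c) * mink p v + b * d * mink v v.
Proof. mink_ring. Qed.

Lemma mink_lcross_l (p v : V3) : mink (lcross p v) p = 0.
Proof. mink_ring. Qed.

Lemma mink_lcross_lcross (p v : V3) :
  mink (lcross p v) (lcross p v) = mink p v * mink p v - mink p p * mink v v.
Proof. mink_ring. Qed.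

Lemma lcross_comb (a b c d : R) (p v : V3) :
  lcross (vadd (vscale a p) (vscale b v)) (vadd (vscale c p) (vscale d v)) =
  vscale (a * d - b * c) (lcross p v).
Proof. v3_ring. Qed.

Lemma lcross_combl (a b k : R) (p q v : V3) :
  lcross (vadd (vscale a p) (vscale b q)) (vscale k v) =
  vadd (vscale (k * a) (lcross p v)) (vscale (k * b) (lcross q v)).
Proof. v3_ring. Qed.

Lemma lcross_lcross_r (p v : V3) :
  lcross (lcross p v) v = vadd (vscale (mink v v) p) (vscale (- mink p v) v).
Proof. v3_ring. Qed.

Lemma lcross_expansion (p v w : V3) :
  vscale (mink (lcross p v) (lcross p v)) w =
  vadd (vscale (mink w (lcross p v)) (lcross p v))
    (vadd (vscale (- (mink w p * mink v v - mink w v * mink p v)) p)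
          (vscale (- (mink w v * mink p p - mink w p * mink p v)) v)).
Proof. destruct p, v, w; v3_ring. Qed.

Section OrthonormalFrame.

Variables p v : V3.
Hypothesis Hpp : mink p p = -1.
Hypothesis Hvv : mink v v = 1.
Hypothesis Hpv : mink p v = 0.

Let n := lcross p v.

Lemma frame_normal_unit : mink n n = 1.
Proof. unfold n; rewrite mink_lcross_lcross, Hpp, Hvv, Hpv; ring. Qed.

Lemma frame_expansion (w : V3) :
  w = vadd (vadd (vscale (- mink w p) p) (vscale (mink w v) v)) (vscale (mink w n) n).
Proof.
  pose proof (lcross_expansion p v w) as E; fold n in E.
  rewrite frame_normal_unit, vscale_1, Hpp, Hvv, Hpv in E.
  rewrite E at 1; v3_ring.
Qed.

Lemma frame_perp_normal (w : V3) : mink w p = 0 -> mink w v = 0 -> w = vscale (mink w n) n.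
Proof. intros Hwp Hwv; rewrite (frame_expansion w) at 1; rewrite Hwp, Hwv; v3_ring. Qed.

Lemma frame_perp_tangent (w : V3) : mink w p = 0 -> mink w n = 0 -> w = vscale (mink w v) v.
Proof. intros Hwp Hwn; rewrite (frame_expansion w) at 1; rewrite Hwp, Hwn; v3_ring. Qed.

Lemma lcross_normal_tangent : lcross n v = p.
Proof. unfold n; rewrite lcross_lcross_r, Hvv, Hpv; v3_ring. Qed.

End OrthonormalFrame.

Lemma mink_inH2_le (x y : V3) : inH2 x -> inH2 y -> mink x y <= -1.
Proof.
  destruct x as [x0 x1 x2], y as [y0 y1 y2]; unfold inH2, mink; cbn.
  intros [Hx Hx0] [Hy Hy0].
  assert (Hsq : (1 + x1 * y1 + x2 * y2) * (1 + x1 * y1 + x2 * y2) <= (x0 * y0) * (x0 * y0)).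
  { (* (1 + |x'|^2)(1 + |y'|^2) - (1 + x'.y')^2 = |x' - y'|^2 + (x1 y2 - x2 y1)^2 *)
    replace ((x0 * y0) * (x0 * y0)) with ((x0 * x0) * (y0 * y0)) by ring.
    pose proof (Rle_0_sqr (x1 - y1)); pose proof (Rle_0_sqr (x2 - y2)).
    pose proof (Rle_0_sqr (x1 * y2 - x2 * y1)); unfold Rsqr in *; nra. }
  assert (0 < x0 * y0) by nra.
  nra.
Qed.

Lemma inH2_of_mink_neg (x p : V3) : mink x x = -1 -> inH2 p -> mink x p < 0 -> inH2 x.
Proof.
  intros Hxx Hp Hxp; split; [exact Hxx |].
  destruct (Rlt_or_le 0 (v0 x)) as [Hpos | Hnpos]; [exact Hpos | exfalso].
  assert (Hneg : inH2 (vscale (-1) x)).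
  { split.
    - rewrite mink_vscalel, mink_sym, mink_vscalel, Hxx; ring.
    - revert Hxx Hnpos; destruct x as [x0 x1 x2]; unfold mink; cbn; intros; nra. }
  pose proof (mink_inH2_le _ _ Hneg Hp) as Hle.
  rewrite mink_vscalel in Hle; lra.
Qed.

Lemma gpt_shift (g : ogeod) (u t : R) :
  gpt g (u + t) = vadd (vscale (cosh t) (gpt g u)) (vscale (sinh t) (gtan g u)).
Proof. apply V3_ext; unfold gpt, gtan, vadd, vscale; cbn; rewrite cosh_add, sinh_add; ring. Qed.

Lemma gtan_shift (g : ogeod) (u t : R) :
  gtan g (u + t) = vadd (vscale (sinh t) (gpt g u)) (vscale (cosh t) (gtan g u)).
Proof. apply V3_ext; unfold gpt, gtan, vadd, vscale; cbn; rewrite cosh_add, sinh_add; ring. Qed.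

Lemma geod_frame (g : ogeod) (u : R) : geod_ok g ->
  mink (gpt g u) (gpt g u) = -1 /\ mink (gtan g u) (gtan g u) = 1 /\
  mink (gpt g u) (gtan g u) = 0.
Proof.
  intros [[Hp _] [Hv Hpv]]; unfold gpt, gtan; rewrite !mink_comb, Hp, Hv, Hpv.
  pose proof (cosh_sq_sub_sinh_sq u); repeat split; lra.
Qed.

Lemma left_normal_at (g : ogeod) (u : R) : lcross (gpt g u) (gtan g u) = left_normal g.
Proof. unfold gpt, gtan; rewrite lcross_comb, cosh_sq_sub_sinh_sq, vscale_1; reflexivity. Qed.

Lemma gpt_inH2 (g : ogeod) (u : R) : geod_ok g -> inH2 (gpt g u).
Proof.
  intros Hg; apply (inH2_of_mink_neg _ (gp g)); [apply geod_frame, Hg | apply Hg |].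
  destruct Hg as [[Hp _] [_ Hpv]]; unfold gpt.
  rewrite mink_vaddl, !mink_vscalel, Hp, mink_sym, Hpv.
  pose proof (cosh_ge_1 u); lra.
Qed.

Lemma on_geod_left_normal (g : ogeod) (y : V3) : on_geod g y -> mink y (left_normal g) = 0.
Proof. intros [t ->]; rewrite <- (left_normal_at g t), mink_sym; apply mink_lcross_l. Qed.

Lemma meets_orth_along_normal (g h : ogeod) (a : R) :
  geod_ok g -> geod_ok h -> meets_orth h g a ->
  exists s e, e * e = 1 /\ gpt h s = gpt g a /\ gtan h s = vscale e (left_normal g).
Proof.
  intros Hg Hh [s [Hpt Horth]].
  destruct (geod_frame g a Hg) as (Hpp & Hvv & Hpv).
  destruct (geod_frame h s Hh) as (_ & Hee & Hpe); rewrite Hpt in Hpe.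
  assert (HE : gtan h s = vscale (mink (gtan h s) (left_normal g)) (left_normal g)).
  { rewrite <- (left_normal_at g a).
    apply frame_perp_normal; [exact Hpp | exact Hvv | exact Hpv | |].
    - rewrite mink_sym; exact Hpe.
    - exact Horth. }
  set (e := mink (gtan h s) (left_normal g)) in HE.
  exists s, e; repeat split; [| exact Hpt | exact HE].
  rewrite HE, mink_vscalel, mink_sym, mink_vscalel, <- (left_normal_at g a) in Hee.
  rewrite frame_normal_unit in Hee; [lra | exact Hpp | exact Hvv | exact Hpv].
Qed.

Lemma hyperbolic_system_trivial (c s x y : R) :
  c * c - s * s = 1 -> c * x + s * y = 0 -> s * x + c * y = 0 -> x = 0 /\ y = 0.
Proof.
  intros Hcs H1 H2; split.
  - transitivity (c * (c * x + s * y) - s * (s * x + c * y)).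
    + rewrite <- (Rmult_1_l x) at 1; rewrite <- Hcs; ring.
    + rewrite H1, H2; ring.
  - transitivity (c * (s * x + c * y) - s * (c * x + s * y)).
    + rewrite <- (Rmult_1_l y) at 1; rewrite <- Hcs; ring.
    + rewrite H1, H2; ring.
Qed.

Lemma common_orth_transport (g g' h : ogeod) (a b : R) :
  geod_ok g -> geod_ok g' -> geod_ok h -> meets_orth h g a -> meets_orth h g' b ->
  exists c s, 1 <= c /\ c * c - s * s = 1 /\
    gpt g' b = vadd (vscale c (gpt g a)) (vscale s (left_normal g)) /\
    mink (gtan g' b) (gpt g a) = 0 /\ mink (gtan g' b) (left_normal g) = 0.
Proof.
  intros Hg Hg' Hh Hha [s' [Hpt' Horth']].
  destruct (meets_orth_along_normal g h a Hg Hh Hha) as (s & e & He & Hpt & Htan).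
  set (d := s' - s).
  assert (Hs' : s' = s + d) by (unfold d; ring).
  assert (HP' : gpt g' b = vadd (vscale (cosh d) (gpt g a)) (vscale (sinh d * e) (left_normal g))).
  { rewrite <- Hpt', Hs', gpt_shift, Hpt, Htan; v3_ring. }
  assert (HE' : gtan h s' = vadd (vscale (sinh d) (gpt g a)) (vscale (cosh d * e) (left_normal g))).
  { rewrite Hs', gtan_shift, Hpt, Htan; v3_ring. }
  assert (Hcs : cosh d * cosh d - (sinh d * e) * (sinh d * e) = 1).
  { replace ((sinh d * e) * (sinh d * e)) with (sinh d * sinh d * (e * e)) by ring.
    rewrite He, Rmult_1_r; apply cosh_sq_sub_sinh_sq. }
  destruct (geod_frame g' b Hg') as (_ & _ & Hp'v').
  rewrite HP', mink_vaddl, !mink_vscalel, !(mink_sym _ (gtan g' b)) in Hp'v'.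
  rewrite HE', mink_vaddl, !mink_vscalel, !(mink_sym _ (gtan g' b)) in Horth'.
  destruct (hyperbolic_system_trivial (cosh d) (sinh d * e)
              (mink (gtan g' b) (gpt g a)) (mink (gtan g' b) (left_normal g)))
    as [Hv'p Hv'n]; [exact Hcs | lra | |].
  { transitivity (e * (sinh d * mink (gtan g' b) (gpt g a)
                       + cosh d * e * mink (gtan g' b) (left_normal g))).
    - replace (cosh d * mink (gtan g' b) (left_normal g))
        with (cosh d * (e * e) * mink (gtan g' b) (left_normal g)) by (rewrite He; ring).
      ring.
    - rewrite Horth'; ring. }
  exists (cosh d), (sinh d * e); repeat split; auto using cosh_ge_1.
Qed.

Lemma common_orth_oriented (g g' h : ogeod) (a b : R) :
  geod_ok g -> geod_ok g' -> geod_ok h -> meets_orth h g a -> meets_orth h g' b ->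
  left_of g (gpt g' b) -> right_of g' (gpt g a) ->
  exists c s, 1 <= c /\ c * c - s * s = 1 /\ 0 < s /\
    gpt g' b = vadd (vscale c (gpt g a)) (vscale s (left_normal g)) /\
    gtan g' b = gtan g a /\
    left_normal g' = vadd (vscale c (left_normal g)) (vscale s (gpt g a)).
Proof.
  intros Hg Hg' Hh Hha Hhb [_ Hleft] [_ Hright].
  destruct (common_orth_transport g g' h a b Hg Hg' Hh Hha Hhb)
    as (c & s & Hc & Hcs & HP' & Hv'p & Hv'n).
  destruct (geod_frame g a Hg) as (Hpp & Hvv & Hpv).
  destruct (geod_frame g' b Hg') as (_ & Hv'v' & _).
  rewrite <- (left_normal_at g' b) in Hright |- *.
  rewrite <- (left_normal_at g a) in *.
  set (P := gpt g a) in *; set (V := gtan g a) in *; set (V' := gtan g' b) in *.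
  assert (Hnn : mink (lcross P V) (lcross P V) = 1) by (apply frame_normal_unit; assumption).
  assert (Hpn : mink P (lcross P V) = 0) by (rewrite mink_sym; apply mink_lcross_l).
  assert (Hs : 0 < s).
  { rewrite HP', mink_vaddl, !mink_vscalel, Hpn, Hnn in Hleft; lra. }
  assert (HV' : V' = vscale (mink V' V) V) by (apply (frame_perp_tangent P V); assumption).
  set (beta := mink V' V) in HV'.
  assert (Hbeta2 : beta * beta = 1).
  { rewrite HV', mink_vscalel, mink_sym, mink_vscalel, Hvv in Hv'v'; lra. }
  assert (HN' : lcross (gpt g' b) V' =
                vscale beta (vadd (vscale c (lcross P V)) (vscale s P))).
  { rewrite HP', HV', lcross_combl, lcross_normal_tangent by assumption; v3_ring. }
  assert (Hbeta : beta = 1).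
  { rewrite HN', mink_sym, mink_vscalel, mink_vaddl, !mink_vscalel in Hright.
    rewrite mink_sym, Hpn, Hpp in Hright; nra. }
  rewrite Hbeta, vscale_1 in HV', HN'.
  exists c, s; repeat split; assumption.
Qed.

Lemma bisector_side (c s p q : R) :
  c * c - s * s = 1 -> 1 <= c -> p <= 0 -> 0 <= c * q + s * p -> 0 < s ->
  0 <= (c - 1) * p + s * q.
Proof.
  intros Hcs Hc Hp Hq Hs.
  (* c ((c - 1) p + s q) >= c (c - 1) p - s^2 p = -(c - 1) p >= 0 *)
  assert (Hscaled : 0 <= c * ((c - 1) * p + s * q)) by nra.
  nra.
Qed.

Lemma homologous_step (g g' h : ogeod) (a b t : R) (y : V3) :
  geod_ok g -> geod_ok g' -> geod_ok h -> meets_orth h g a -> meets_orth h g' b ->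
  left_of g (gpt g' b) -> right_of g' (gpt g a) ->
  inH2 y -> 0 <= mink y (left_normal g') ->
  - mink (gpt g' (b + t)) y <= - mink (gpt g (a + t)) y.
Proof.
  intros Hg Hg' Hh Hha Hhb Hleft Hright HyH Hy.
  destruct (common_orth_oriented g g' h a b Hg Hg' Hh Hha Hhb Hleft Hright)
    as (c & s & Hc & Hcs & Hs & HP' & HV' & HN').
  assert (Hpy : mink (gpt g a) y <= -1) by (apply mink_inH2_le; [apply gpt_inH2 |]; assumption).
  rewrite HN', mink_sym, mink_vaddl, !mink_vscalel in Hy.
  pose proof (bisector_side c s (mink (gpt g a) y) (mink (left_normal g) y)
                Hcs Hc ltac:(lra) Hy Hs) as Hside.
  rewrite !gpt_shift, HP', HV', !mink_vaddl, !mink_vscalel, mink_vaddl, !mink_vscalel.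
  pose proof (cosh_ge_1 t).
  assert (0 <= cosh t * ((c - 1) * mink (gpt g a) y + s * mink (left_normal g) y))
    by (apply Rmult_le_pos; lra).
  lra.
Qed.

Theorem lemmaA11 (n : nat) (gam : nat -> ogeod) (x : nat -> V3)
  (a b : nat -> R) (y : V3) :
  linear_seq n gam ->
  (* gpt (gam i) (a i) and gpt (gam (i+1)) (b i) are the feet of the common
     orthogonal eta_i of gamma_i and gamma_(i+1) *)
  (forall i, (i < n)%nat -> common_orth_feet (gam i) (gam (S i)) (a i) (b i)) ->
  (* (x_i) is a homologous sequence of points *)
  (forall i, (i <= n)%nat -> on_geod (gam i) (x i)) ->
  (forall i, (i < n)%nat -> exists t,
       x i = gpt (gam i) (a i + t) /\ x (S i) = gpt (gam (S i)) (b i + t)) ->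
  on_geod (gam n) y ->
  hdist (x n) y <= hdist (x O) y.
Proof.
  intros (Hok & _ & _ & Hright & Hleft) Hfeet Hon Hhom Hy.
  assert (HyH : inH2 y) by (destruct Hy as [u ->]; apply gpt_inH2, Hok; lia).
  assert (Hy_left : forall k, (k < n)%nat -> 0 <= mink y (left_normal (gam (S k)))).
  { intros k Hk; destruct (Nat.eq_dec (S k) n) as [<- | Hne].
    - rewrite (on_geod_left_normal _ _ Hy); lra.
    - apply Rlt_le, (Hleft (S k) n); [lia | lia | exact Hy]. }
  assert (Hmono : forall k, (k <= n)%nat -> - mink (x k) y <= - mink (x O) y).
  { induction k as [| k IH]; intros Hk; [lra |].
    destruct (Hhom k ltac:(lia)) as (t & Hxk & ->).
    destruct (Hfeet k ltac:(lia)) as (h & Hh & Hha & Hhb).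
    eapply Rle_trans; [| apply IH; lia]; rewrite Hxk.
    apply (homologous_step _ _ h); auto with arith.
    - apply (Hleft k (S k)); [lia | lia | exists (b k); reflexivity].
    - apply (Hright (S k) k); [lia | lia | exists (a k); reflexivity]. }
  assert (Hxn : inH2 (x n)) by (destruct (Hon n (le_n n)) as [u ->]; apply gpt_inH2, Hok; lia).
  unfold hdist; apply arcosh_le.
  - pose proof (mink_inH2_le _ _ Hxn HyH); lra.
  - apply Hmono; lia.
Qed.
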